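(* $\mathsf{AP}(R_3,R_3)=\operatorname{Pol}(R_3,R'_3)=\mathsf{I}$.
   Context: Tuples in $\{0,1\}^4$ are written as strings $abcd$. The relations $R_1,\dots,R_5\subseteq\{0,1\}^4$ are $R_1=\{0000,1000,0100,1100,1010,0110,1001,0101,0011,1011,0111,1111\}$, $R_2=\{0000,1000,0100,1100,1010,0101,0011,1111\}$, $R_3=\{0000,1100,1010,0101,0011,1011,0111,1111\}$, $R_4=\{0000,1100,1010,0101,0011,1111\}$, $R_5=\{0000,1100,1010,0110,1001,0101,0011,1111\}$. For $R,S\subseteq\{0,1\}^4$, a Boolean function $f\colon\{0,1\}^n\to\{0,1\}$ is analogy-preserving relative to $(R,S)$ if for all $\mathbf{a},\mathbf{b},\mathbf{c},\mathbf{d}\in\{0,1\}^n$ with $(a_i,b_i,c_i,d_i)\in R$ for every $i$ and such that $(f(\mathbf{a}),f(\mathbf{b}),f(\mathbf{c}),x)\in S$ for some $x\in\{0,1\}$, we have $(f(\mathbf{a}),f(\mathbf{b}),f(\mathbf{c}),f(\mathbf{d}))\in S$; $\mathsf{AP}(R,S)$ is the set of all such functions of all arities. $S':=S\cup\{(a,b,c,d)\mid\nexists x\colon(a,b,c,x)\in S\}$, and $\operatorname{Pol}(R,S)$ is the set of Boolean functions $f$ with $f(\mathbf{a}_1,\dots,\mathbf{a}_n)\in S$ (componentwise) for all $\mathbf{a}_1,\dots,\mathbf{a}_n\in R$. $\mathsf{I}$ is the set of all Boolean functions (of all arities) that are constant or a projection. *)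

From mathcomp Require Import all_boot.
Set Implicit Arguments. Unset Strict Implicit. Unset Printing Implicit Defensive.

(* A relation R ⊆ {0,1}^4, with tuple abcd read as R a b c d (0 = false, 1 = true). *)
Definition rel4 := bool -> bool -> bool -> bool -> bool.

Definition rel_of_list (l : seq (bool * bool * bool * bool)) : rel4 :=
  fun a b c d => (a, b, c, d) \in l.

Definition R3 : rel4 := rel_of_list
  [:: (false, false, false, false); (true, true, false, false);
      (true, false, true, false); (false, true, false, true);
      (false, false, true, true); (true, false, true, true);
      (false, true, true, true); (true, true, true, true)].

Definition rel_prime (S : rel4) : rel4 :=
  fun a b c d => S a b c d || ~~ [exists x : bool, S a b c x].

Definition boolfun (n : nat) := ('I_n -> bool) -> bool.

Definition AP (R S : rel4) (n : nat) (f : boolfun n) : Prop :=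
  forall a b c d : 'I_n -> bool,
    (forall i, R (a i) (b i) (c i) (d i)) ->
    (exists x : bool, S (f a) (f b) (f c) x) ->
    S (f a) (f b) (f c) (f d).

Definition Pol (R S : rel4) (n : nat) (f : boolfun n) : Prop :=
  forall a b c d : 'I_n -> bool,
    (forall i, R (a i) (b i) (c i) (d i)) ->
    S (f a) (f b) (f c) (f d).

Definition in_I (n : nat) (f : boolfun n) : Prop :=
  (exists b : bool, forall x, f x = b) \/ (exists i : 'I_n, forall x, f x = x i).

(* Analogy preservation w.r.t. (R, S) is the same as being a polymorphism from
   R to S', since S' adds exactly the tuples whose first three entries admit no
   completion in S.  For R3 every constant and projection is such a
   polymorphism.  Conversely, a polymorphism f from R3 to R3' with f(0) = 1 is
   constant 1, and one with f(0) = f(1) = 0 is constant 0.  If f(0) = 0 and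
   f(1) = 1, the rows (0, b, c, b \/ c) of R3 make f a join homomorphism, so
   f(x) is the join of the f(e_i) with x_i = 1; the rows (e_i, e_i \/ e_j, 0, e_j)
   show that at most one f(e_i) is 1, so f is a projection. *)
From mathcomp Require Import all_boot.

Set Implicit Arguments.
Unset Strict Implicit.
Unset Printing Implicit Defensive.

Lemma AP_Pol_rel_prime (R S : rel4) (n : nat) (f : boolfun n) :
  AP R S f <-> Pol R (rel_prime S) f.
Proof.
split=> [fAP a b c d abcdR | fPol a b c d abcdR [x Sx]].
  rewrite /rel_prime; case: existsP => [[x Sx] | _]; last by rewrite orbT.
  by rewrite (fAP a b c d abcdR) //; exists x.
have := fPol a b c d abcdR; rewrite /rel_prime.
by case: existsP => [_ | []]; [rewrite orbF | exists x].
Qed.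

Lemma in_I_Pol (R S : rel4) (n : nat) (f : boolfun n) :
  (forall a b c d, R a b c d -> S a b c d) -> (forall x, S x x x x) ->
  in_I f -> Pol R S f.
Proof.
move=> subRS Sdiag [[x fx] | [i fi]] a b c d abcdR; first by rewrite !fx Sdiag.
by rewrite !fi; apply/subRS/abcdR.
Qed.

Lemma R3_diag (x : bool) : R3 x x x x.
Proof. by case: x. Qed.

Lemma existsb_bool (P : pred bool) : [exists x, P x] = P true || P false.
Proof.
by apply/existsP/orP => [[[] ->] | []]; [left | right | exists true | exists false].
Qed.

Lemma rel_prime_R3E (a b c d : bool) :
  rel_prime R3 a b c d = R3 a b c d || [&& a, ~~ b & ~~ c].
Proof. by rewrite /rel_prime existsb_bool; case: a b c d => [] [] [] []. Qed.

Definition unit_vec {n : nat} (i : 'I_n) : 'I_n -> bool := fun j => j == i.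

Section JoinHomomorphism.

Variables (n : nat) (f : boolfun n).
Hypothesis f_false : f (fun=> false) = false.
Hypothesis f_join : forall b c d : 'I_n -> bool,
  (forall i, d i = b i || c i) -> f d = f b || f c.

Lemma join_hom_has (s : seq 'I_n) (x : 'I_n -> bool) :
  (forall j, x j -> j \in s) -> f x = has (fun i => x i && f (unit_vec i)) s.
Proof.
elim: s x => [|i s IH] x x_s /=.
  rewrite -f_false -[RHS]orbb; apply: f_join => j.
  by apply/negbTE/negP => /x_s.
rewrite (f_join (b := fun j => x j && (j == i)) (c := fun j => x j && (j \in s)));
  last by move=> j; case xj: (x j) => //=; rewrite -in_cons x_s.
rewrite (IH (fun j => x j && (j \in s))); last by move=> j /andP[].
congr (_ || _); last by apply: eq_in_has => j ->; rewrite andbT.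
case: (boolP (x i)) => [xi | /negbTE xi] /=.
  rewrite -[RHS]orbF -f_false; apply: f_join => j.
  by rewrite orbF /unit_vec; case: eqP => [-> | _]; rewrite ?xi ?andbF.
rewrite -f_false -[RHS]orbb; apply: f_join => j.
by case: eqP => [-> | _]; rewrite ?xi ?andbF.
Qed.

Lemma join_hom_expand (x : 'I_n -> bool) :
  f x = [exists i, x i && f (unit_vec i)].
Proof.
rewrite (join_hom_has (s := enum 'I_n)) => [|j _]; last by rewrite mem_enum.
by apply/hasP/existsP => [[i _ ?] | [i ?]]; exists i; rewrite ?mem_enum.
Qed.

End JoinHomomorphism.

Section PolymorphismR3.

Variables (n : nat) (f : boolfun n).
Hypothesis f_Pol : Pol R3 (rel_prime R3) f.

Lemma Pol_R3_const_true : f (fun=> false) = true -> forall x, f x = true.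
Proof.
move=> f0 x.
have /f_Pol : forall i, R3 true false true (x i) by move=> i; case: (x i).
by rewrite f0 rel_prime_R3E; case: (f _); case: (f x).
Qed.

Lemma Pol_R3_const_false :
  f (fun=> false) = false -> f (fun=> true) = false -> forall x, f x = false.
Proof.
move=> f0 f1 x.
have /f_Pol : forall i, R3 true false true (x i) by move=> i; case: (x i).
by rewrite f0 f1 rel_prime_R3E; case: (f x).
Qed.

Lemma Pol_R3_join : f (fun=> false) = false ->
  forall b c d : 'I_n -> bool, (forall i, d i = b i || c i) -> f d = f b || f c.
Proof.
move=> f0 b c d d_bc.
have /f_Pol : forall i, R3 false (b i) (c i) (d i).
  by move=> i; rewrite d_bc; case: (b i); case: (c i).
by rewrite f0 rel_prime_R3E; case: (f b); case: (f c); case: (f d).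
Qed.

Lemma Pol_R3_unit_vec_inj : f (fun=> false) = false ->
  forall i j : 'I_n, f (unit_vec i) -> f (unit_vec j) -> i = j.
Proof.
move=> f0 i j fi fj; apply/eqP; apply: contraT => neq_ij.
have /f_Pol : forall k, R3 (unit_vec i k) (unit_vec i k || unit_vec j k) false (unit_vec j k).
  move=> k; rewrite /unit_vec.
  by case: (eqVneq k i) => [-> | _]; [rewrite (negbTE neq_ij) | case: (k == j)].
rewrite (Pol_R3_join f0 (b := unit_vec i) (c := unit_vec j) (d := fun k => _ || _)) //.
by rewrite f0 fi fj rel_prime_R3E.
Qed.

Lemma Pol_R3_in_I : in_I f.
Proof.
case f0: (f (fun=> false)); first by left; exists true; apply: Pol_R3_const_true.
case f1: (f (fun=> true)); last by left; exists false; apply: Pol_R3_const_false.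
have f_expand := join_hom_expand f0 (Pol_R3_join f0).
move: f1; rewrite f_expand => /existsP[i /= fi].
right; exists i => x; rewrite f_expand.
apply/existsP/idP => [[k /andP[xk fk]] | xi]; last by exists i; rewrite xi fi.
by rewrite -(Pol_R3_unit_vec_inj f0 fk fi).
Qed.

End PolymorphismR3.

Theorem mainTheorem9 :
  forall (n : nat) (f : boolfun n),
    (AP R3 R3 f <-> Pol R3 (rel_prime R3) f) /\
    (Pol R3 (rel_prime R3) f <-> in_I f).
Proof.
move=> n f; split; first exact: AP_Pol_rel_prime.
split; first exact: Pol_R3_in_I.
apply: in_I_Pol => [a b c d R3abcd | x]; first by rewrite /rel_prime R3abcd.
by rewrite rel_prime_R3E R3_diag.
Qed.
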